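(* Let $a<0$ and $m\in(-1,0)$, and let $L_a(M,m)$ be as defined in the context. If $0<M_1<M_2$ and $\beta_+(M_j)<0$ for $j=1,2$, then $L_a(M_1,m)>L_a(M_2,m)$. Moreover $L_a(0,m)=0$ and $\lim_{M\to+\infty}L_a(M,m)=a+\ln(1-a)$.
   Context: Let $r(x)=ax/(1+x)$ for $x>-1$. For $M\ge0$, $m\in(-1,0)$ set $\alpha_+(M)=\frac{M}{r(M)}-\frac{r(M)}{2ar(m)}=\frac{1+M}{a}-\frac{M(1+m)}{2am(1+M)}$, $\beta_+(M)=\frac{M}{r(M)}+\frac{r(M)}{2ar(m)}=\frac{1+M}{a}+\frac{M(1+m)}{2am(1+M)}$, and $z_+(t)=M$ for $t\le\alpha_+$, $z_+(t)=M+\frac{ar(m)}{2}(t-\alpha_+)^2$ for $\alpha_+\le t\le\beta_+$, $z_+(t)=r(M)t$ for $\beta_+\le t\le0$. Define $L_a(M,m)=\int_{-1}^0 r(z_+(s))\,ds$. *)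

From Stdlib Require Import Reals Lra.
From Coquelicot Require Import Coquelicot.
Open Scope R_scope.

Definition r (a x : R) : R := a * x / (1 + x).

(* alpha_+(M), beta_+(M), in the form valid also at M = 0 *)
Definition alpha_p (a m M : R) : R :=
  (1 + M) / a - M * (1 + m) / (2 * a * m * (1 + M)).
Definition beta_p (a m M : R) : R :=
  (1 + M) / a + M * (1 + m) / (2 * a * m * (1 + M)).

Definition z_p (a m M t : R) : R :=
  if Rle_dec t (alpha_p a m M) then M
  else if Rle_dec t (beta_p a m M) then
    M + (a * r a m / 2) * (t - alpha_p a m M) ^ 2
  else r a M * t.

Definition L (a M m : R) : R := RInt (fun s => r a (z_p a m M s)) (-1) 0.

From Stdlib Require Import Reals Psatz.
From Coquelicot Require Import Coquelicot.
Open Scope R_scope.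

(* For M > 0, z_+ glues the constant M to the line r(M) t by an arc of the
   parabola of curvature a r(m) < 0 tangent to both; the curvature does not
   depend on M.  Such a join is, pointwise, the maximum of the parabolas of that
   curvature lying below the corner min(M, r(M) t).  Increasing M raises the
   corner and, r being decreasing, makes the line steeper, so every parabola
   under the corner for M1 lies strictly below z_+ for M2 on t < 0: on the arc
   this is because two parabolas of equal curvature differ by an affine
   function.  Since z_+ >= 0 on [-1, 0] and r is decreasing there, L decreases.
   When M is large, beta_+ < -1, so z_+ is the line r(M) t on [-1, 0], which
   gives L = a + a ln(1 - r(M)) / r(M), and r(M) -> a. *)

Definition parabola (c h u s : R) : R := h + c / 2 * (s - u) ^ 2.

Definition parabolic_join (M c k al be : R) : R -> R :=
  extension_cont (fun _ => M) (extension_cont (parabola c M al) (fun t => k * t) be) al.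

Definition below_corner (c M k h u : R) : Prop :=
  forall s, parabola c h u s <= M /\ parabola c h u s <= k * s.

Lemma parabola_le_vertex c h u s : c <= 0 -> parabola c h u s <= h.
Proof. intros hc. unfold parabola. assert (0 <= (s - u) ^ 2) by apply pow2_ge_0. nra. Qed.

Lemma continuous_extension_cont (f g : R -> R) (a x : R) :
  continuous f x -> continuous g x -> f a = g a -> continuous (extension_cont f g a) x.
Proof.
  intros hf hg hfg.
  destruct (Rtotal_order x a) as [hx | [-> | hx]].
  - apply (continuous_ext_loc _ f); [| exact hf].
    apply (filter_imp (fun y => y < a)); [| exact (open_lt a x hx)].
    intros y hy. unfold extension_cont. destruct (Rle_dec y a); [reflexivity | lra].
  - now apply extension_cont_continuous.
  - apply (continuous_ext_loc _ g); [| exact hg].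
    apply (filter_imp (fun y => a < y)); [| exact (open_gt a x hx)].
    intros y hy. unfold extension_cont. destruct (Rle_dec y a); [lra | reflexivity].
Qed.

Section ParabolicJoin.

Variables (M c k al be : R).
(* hk and hM say that the arc is tangent to the level M at al and to the line k t at be. *)
Hypotheses (hc : c < 0) (hab : al < be) (hk : k = c * (be - al)) (hM : 2 * M = k * (al + be)).

Let z := parabolic_join M c k al be.

Lemma arc_tangent_form s : parabola c M al s = k * s + c / 2 * (s - be) ^ 2.
Proof. unfold parabola. subst k. lra. Qed.

Lemma arc_le_line s : parabola c M al s <= k * s.
Proof.
  rewrite arc_tangent_form. assert (0 <= (s - be) ^ 2) by apply pow2_ge_0. nra.
Qed.

Lemma parabolic_join_eq_line t : be < t -> z t = k * t.
Proof.
  intros ht. unfold z, parabolic_join, extension_cont.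
  destruct (Rle_dec t al); [lra |]. destruct (Rle_dec t be); [lra | reflexivity].
Qed.

Lemma parabolic_join_nonneg t : be <= 0 -> t <= 0 -> 0 <= z t.
Proof.
  intros hbe ht. assert (k < 0) by (subst k; nra).
  assert (hkbe : parabola c M al be = k * be) by (rewrite arc_tangent_form; lra).
  unfold z, parabolic_join, extension_cont.
  destruct (Rle_dec t al); [nra |].
  destruct (Rle_dec t be); [| nra].
  assert ((t - al) ^ 2 <= (be - al) ^ 2) by nra.
  unfold parabola in *. nra.
Qed.

Lemma continuous_parabolic_join x : continuous z x.
Proof.
  apply continuous_extension_cont.
  - apply continuous_const.
  - apply continuous_extension_cont.
    + apply (ex_derive_continuous (parabola c M al)). unfold parabola. auto_derive. exact I.
    + apply (ex_derive_continuous (fun t => k * t)). auto_derive. exact I.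
    + rewrite arc_tangent_form. lra.
  - unfold extension_cont. destruct (Rle_dec al be); [| lra].
    unfold parabola. lra.
Qed.

Lemma parabolic_join_supported t :
  exists h u, z t = parabola c h u t /\ below_corner c M k h u.
Proof.
  assert (k < 0) by (subst k; nra).
  unfold z, parabolic_join, extension_cont.
  destruct (Rle_dec t al).
  - exists M, t. split; [unfold parabola; ring |].
    intros s. split; [apply parabola_le_vertex; lra |].
    pose proof (arc_le_line (s + (al - t))).
    replace (parabola c M t s) with (parabola c M al (s + (al - t))) by (unfold parabola; ring).
    nra.
  - destruct (Rle_dec t be).
    + exists M, al. split; [reflexivity |].
      intros s. split; [apply parabola_le_vertex; lra | apply arc_le_line].
    + exists (M + k * (t - be)), (al + (t - be)).
      split; [pose proof (arc_tangent_form be); unfold parabola in *; nra |].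
      intros s.
      replace (parabola c (M + k * (t - be)) (al + (t - be)) s)
        with (parabola c M al (s - (t - be)) + k * (t - be)) by (unfold parabola; ring).
      pose proof (parabola_le_vertex c M al (s - (t - be))).
      pose proof (arc_le_line (s - (t - be))).
      split; nra.
Qed.

Lemma parabolic_join_gt_below_corner M' k' h u t :
  M' < M -> k < k' -> be < 0 -> below_corner c M' k' h u -> t < 0 ->
  parabola c h u t < z t.
Proof.
  intros hM' hk' hbe hbelow ht.
  unfold z, parabolic_join, extension_cont.
  destruct (Rle_dec t al); [destruct (hbelow t); lra |].
  destruct (Rle_dec t be); [| destruct (hbelow t); nra].
  destruct (hbelow al) as [hal _]. destruct (hbelow be) as [_ hbe'].
  set (D s := parabola c h u s - parabola c M al s).
  assert (hDal : D al < 0).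
  { unfold D. replace (parabola c M al al) with M by (unfold parabola; ring). lra. }
  assert (hDbe : D be < 0).
  { unfold D. rewrite arc_tangent_form. replace (be - be) with 0 by ring. nra. }
  (* parabolas of equal curvature differ by an affine function *)
  assert (haff : D t * (be - al) = D al * (be - t) + D be * (t - al))
    by (unfold D, parabola; ring).
  assert (D t < 0) by nra.
  unfold D in *. lra.
Qed.

End ParabolicJoin.

Lemma parabolic_join_lt c M1 k1 al1 be1 M2 k2 al2 be2 t :
  c < 0 -> al1 < be1 -> k1 = c * (be1 - al1) -> 2 * M1 = k1 * (al1 + be1) ->
  k2 = c * (be2 - al2) -> 2 * M2 = k2 * (al2 + be2) ->
  M1 < M2 -> k2 < k1 -> be2 < 0 -> t < 0 ->
  parabolic_join M1 c k1 al1 be1 t < parabolic_join M2 c k2 al2 be2 t.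
Proof.
  intros hc hab1 hk1 hM1 hk2 hM2 hM hk hbe ht.
  destruct (parabolic_join_supported M1 c k1 al1 be1 hc hab1 hk1 hM1 t) as [h [u [-> hbelow]]].
  now apply (parabolic_join_gt_below_corner M2 c k2 al2 be2 hk2 hM2 M1 k1).
Qed.

Lemma r_0 a : r a 0 = 0.
Proof. unfold r. field. Qed.

Lemma r_lt_contravar a x y : a < 0 -> -1 < x -> x < y -> r a y < r a x.
Proof.
  intros ha hx hxy. unfold r.
  replace (a * y / (1 + y)) with (a - a / (1 + y)) by (field; lra).
  replace (a * x / (1 + x)) with (a - a / (1 + x)) by (field; lra).
  assert (/ (1 + y) < / (1 + x)) by (apply Rinv_lt_contravar; nra).
  unfold Rdiv. nra.
Qed.

Lemma continuous_r a x : x <> -1 -> continuous (r a) x.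
Proof.
  intros hx. apply (ex_derive_continuous (r a)). unfold r. auto_derive. lra.
Qed.

Lemma is_lim_r a : is_lim (r a) p_infty a.
Proof.
  assert (hinv : is_lim (fun M => / (1 + M)) p_infty 0).
  { replace (Finite 0) with (Rbar_inv p_infty) by reflexivity.
    apply is_lim_inv; [| discriminate].
    eapply is_lim_plus; [apply is_lim_const | apply is_lim_id | reflexivity]. }
  apply is_lim_ext_loc with (fun M => a - a * / (1 + M)).
  - exists 0. intros x hx. unfold r. field. lra.
  - replace (Finite a) with (Finite (a - a * 0)) by (f_equal; ring).
    apply is_lim_minus'; [apply is_lim_const | exact (is_lim_scal_l _ a _ _ hinv)].
Qed.

Lemma RInt_r_line a k : k < 1 -> k <> 0 ->
  RInt (fun s => r a (k * s)) (-1) 0 = a + a * ln (1 - k) / k.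
Proof.
  intros hk1 hk0. apply is_RInt_unique.
  set (F s := a * s - a / k * ln (1 + k * s)).
  replace (a + a * ln (1 - k) / k) with (minus (F 0) (F (-1))).
  2: { unfold F, minus, plus, opp; simpl.
       replace (1 + k * 0) with 1 by ring. replace (1 + k * -1) with (1 - k) by ring.
       rewrite ln_1. field. exact hk0. }
  apply (is_RInt_derive F).
  - intros x hx. rewrite Rmin_left in hx by lra. rewrite Rmax_right in hx by lra.
    unfold F. auto_derive; [nra |]. unfold r. field. split; nra.
  - intros x hx. rewrite Rmin_left in hx by lra. rewrite Rmax_right in hx by lra.
    apply (continuous_comp (fun s => k * s) (r a)).
    + apply (ex_derive_continuous (fun s => k * s)). auto_derive. exact I.
    + apply continuous_r. nra.
Qed.

Lemma z_p_eq_parabolic_join a m M :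
  z_p a m M = parabolic_join M (a * r a m) (r a M) (alpha_p a m M) (beta_p a m M).
Proof. reflexivity. Qed.

Lemma z_p_tangency a m M : a < 0 -> -1 < m < 0 -> 0 < M ->
  a * r a m < 0 /\ alpha_p a m M < beta_p a m M /\
  r a M = a * r a m * (beta_p a m M - alpha_p a m M) /\
  2 * M = r a M * (alpha_p a m M + beta_p a m M).
Proof.
  intros ha hm hM.
  assert (hrm : 0 < r a m) by (rewrite <- (r_0 a); apply r_lt_contravar; lra).
  assert (hrM : r a M < 0) by (rewrite <- (r_0 a); apply r_lt_contravar; lra).
  assert (hslope : r a M = a * r a m * (beta_p a m M - alpha_p a m M)).
  { unfold r, alpha_p, beta_p. field. repeat split; lra. }
  assert (hc : a * r a m < 0) by nra.
  split; [exact hc |]. split; [nra |]. split; [exact hslope |].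
  unfold r, alpha_p, beta_p. field. repeat split; lra.
Qed.

Lemma z_p_nonneg a m M t : a < 0 -> -1 < m < 0 -> 0 < M ->
  beta_p a m M <= 0 -> t <= 0 -> 0 <= z_p a m M t.
Proof.
  intros ha hm hM hbe ht. destruct (z_p_tangency a m M ha hm hM) as (hc & hab & hk & hv).
  rewrite z_p_eq_parabolic_join. now apply parabolic_join_nonneg.
Qed.

Lemma continuous_r_z_p a m M x : a < 0 -> -1 < m < 0 -> 0 < M ->
  beta_p a m M <= 0 -> x <= 0 -> continuous (fun s => r a (z_p a m M s)) x.
Proof.
  intros ha hm hM hbe hx.
  apply (continuous_comp (z_p a m M) (r a)).
  - destruct (z_p_tangency a m M ha hm hM) as (hc & hab & hk & hv).
    rewrite z_p_eq_parabolic_join. now apply continuous_parabolic_join.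
  - apply continuous_r. pose proof (z_p_nonneg a m M x ha hm hM hbe hx). lra.
Qed.

Lemma z_p_lt a m M1 M2 t : a < 0 -> -1 < m < 0 -> 0 < M1 -> M1 < M2 ->
  beta_p a m M2 < 0 -> t < 0 -> z_p a m M1 t < z_p a m M2 t.
Proof.
  intros ha hm hM1 hM hbe ht.
  destruct (z_p_tangency a m M1 ha hm hM1) as (hc & hab1 & hk1 & hv1).
  destruct (z_p_tangency a m M2 ha hm ltac:(lra)) as (_ & _ & hk2 & hv2).
  rewrite !z_p_eq_parabolic_join.
  apply parabolic_join_lt; try assumption.
  apply r_lt_contravar; lra.
Qed.

Lemma z_p_at_0 a m t : z_p a m 0 t = 0.
Proof.
  assert (alpha_p a m 0 = beta_p a m 0) by (unfold alpha_p, beta_p; lra).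
  unfold z_p. rewrite r_0.
  destruct (Rle_dec t (alpha_p a m 0)); [reflexivity |].
  destruct (Rle_dec t (beta_p a m 0)); [lra | ring].
Qed.

Lemma beta_p_eventually_lt a m y : a < 0 -> -1 < m < 0 ->
  Rbar_locally p_infty (fun M => beta_p a m M < y).
Proof.
  intros ha hm. set (K := (1 + m) / (2 * m)).
  assert (hK : K < 0).
  { unfold K, Rdiv. assert (/ (2 * m) < 0) by (apply Rinv_lt_0_compat; lra). nra. }
  exists (Rmax 0 (a * y - 1 - K)). intros M hM.
  pose proof (Rmax_l 0 (a * y - 1 - K)). pose proof (Rmax_r 0 (a * y - 1 - K)).
  assert (hbeta : a * beta_p a m M = 1 + M + K * (1 - / (1 + M))).
  { unfold beta_p, K. field. repeat split; lra. }
  assert (0 < / (1 + M)) by (apply Rinv_0_lt_compat; lra).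
  nra.
Qed.

Lemma L_lt a m M1 M2 : a < 0 -> -1 < m < 0 -> 0 < M1 -> M1 < M2 ->
  beta_p a m M1 < 0 -> beta_p a m M2 < 0 -> L a M2 m < L a M1 m.
Proof.
  intros ha hm hM1 hM hbe1 hbe2. unfold L.
  apply RInt_lt; [lra | intros x hx; apply continuous_r_z_p; lra .. |].
  intros x hx. apply r_lt_contravar; [exact ha | |].
  - pose proof (z_p_nonneg a m M1 x ha hm hM1 ltac:(lra) ltac:(lra)). lra.
  - apply z_p_lt; lra.
Qed.

Lemma L_at_0 a m : L a 0 m = 0.
Proof.
  unfold L. rewrite (RInt_ext _ (fun _ => 0)).
  - rewrite RInt_const. apply Rmult_0_r.
  - intros x _. rewrite z_p_at_0. apply r_0.
Qed.

Lemma is_lim_L a m : a < 0 -> -1 < m < 0 ->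
  is_lim (fun M => L a M m) p_infty (a + ln (1 - a)).
Proof.
  intros ha hm.
  assert (hlim : is_lim (fun M => a + a * ln (1 - r a M) / r a M) p_infty (a + ln (1 - a))).
  { replace (a + ln (1 - a)) with (a + a * ln (1 - a) / a) by (field; lra).
    apply (is_lim_comp_continuous (r a) (fun k => a + a * ln (1 - k) / k)).
    - apply is_lim_r.
    - apply (ex_derive_continuous (fun k => a + a * ln (1 - k) / k)).
      auto_derive. split; lra. }
  refine (is_lim_ext_loc _ _ _ _ _ hlim).
  apply (filter_imp (fun M => 0 < M /\ beta_p a m M < -1)).
  - intros M [hM hbe]. symmetry. unfold L.
    destruct (z_p_tangency a m M ha hm hM) as (_ & hab & _).
    assert (hrM : r a M < 0) by (rewrite <- (r_0 a); apply r_lt_contravar; lra).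
    rewrite <- RInt_r_line by lra.
    apply RInt_ext. intros s hs.
    rewrite Rmin_left in hs by lra. rewrite Rmax_right in hs by lra.
    rewrite z_p_eq_parabolic_join, parabolic_join_eq_line; [reflexivity | exact hab | lra].
  - apply filter_and; [exists 0; tauto | now apply beta_p_eventually_lt].
Qed.

Theorem lemma3p12 (a m : R) (ha : a < 0) (hm : -1 < m < 0) :
  (forall M1 M2 : R, 0 < M1 -> M1 < M2 ->
     beta_p a m M1 < 0 -> beta_p a m M2 < 0 -> L a M1 m > L a M2 m) /\
  L a 0 m = 0 /\
  is_lim (fun M => L a M m) p_infty (a + ln (1 - a)).
Proof.
  split; [| split].
  - intros M1 M2 hM1 hM hbe1 hbe2. now apply L_lt.
  - apply L_at_0.
  - now apply is_lim_L.
Qed.
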